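(* Let $G$ be a non-supergraceful graph with $p$ nodes and $q$ edges having a node $u$ of degree $p-1$. Suppose there is a semitotal labeling $\varphi$ of $G$ such that $\varphi(u) = \mathrm{opt}(G)$ and $\mathrm{opt}(G)-1 \in N(\varphi) \cup E(\varphi)$, where $\mathrm{opt}(G) = p+q+q_0$. Then there is a semitotal labeling $\mu$ of $G$ such that $1 \in N(\mu)$.
   Context: Graphs are finite, simple, connected. For a labeling $\varphi: V(G) \to \mathbb{Z}_{>0}$ let $N(\varphi) = \{\varphi(x) : x \in V(G)\}$ and $E(\varphi) = \{|\varphi(x)-\varphi(y)| : xy \in E(G)\}$. A total labeling of a $(p,q)$-graph $G$ is a map $\varphi$ such that the $p$ node labels and the $q$ edge labels are pairwise distinct and $N(\varphi) \cup E(\varphi) = \{1,\dots,p+q\}$; $G$ is supergraceful if it has one, non-supergraceful otherwise. If $G$ is non-supergraceful, let $q_0 > 0$ be the least integer such that there is a labeling $\varphi$ with all $p$ node labels and $q$ edge labels pairwise distinct and $N(\varphi) \cup E(\varphi) \subseteq \{1,2,\dots,p+q+q_0\}$; such a $\varphi$ is a semitotal labeling, and $\mathrm{opt}(G) := p+q+q_0$. *)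

From mathcomp Require Import all_boot.
Set Implicit Arguments. Unset Strict Implicit. Unset Printing Implicit Defensive.

(* A finite simple graph on vertex type T is given by an adjacency relation
   e : rel T, assumed symmetric and irreflexive (hypotheses of the theorem). *)

Section Labelings.
Variables (T : finType) (e : rel T).

Definition edges : {set {set T}} :=
  [set E | [exists x, exists y, e x y && (E == [set x; y])]].

Definition nnodes : nat := #|T|.
Definition nedges : nat := #|edges|.

Definition deg (u : T) : nat := #|[set v | e u v]|.

Definition gconnected : Prop := forall x y : T, connect e x y.

Definition ndist (a b : nat) : nat := maxn a b - minn a b.

Definition in_N (phi : T -> nat) (k : nat) : Prop := exists x, phi x = k.
Definition in_E (phi : T -> nat) (k : nat) : Prop :=
  exists x y, e x y /\ ndist (phi x) (phi y) = k.
Definition in_NE (phi : T -> nat) (k : nat) : Prop := in_N phi k \/ in_E phi k.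

Definition distinct_labeling (phi : T -> nat) : Prop :=
  [/\ forall x, 0 < phi x,
      injective phi,
      (forall x y x' y', e x y -> e x' y' ->
         ndist (phi x) (phi y) = ndist (phi x') (phi y') ->
         [set x; y] = [set x'; y'])
    & forall z x y, e x y -> phi z <> ndist (phi x) (phi y)].

Definition total_labeling (phi : T -> nat) : Prop :=
  distinct_labeling phi /\
  forall k, in_NE phi k <-> (1 <= k <= nnodes + nedges).

Definition supergraceful : Prop := exists phi, total_labeling phi.

Definition bounded_labeling (M : nat) (phi : T -> nat) : Prop :=
  distinct_labeling phi /\ forall k, in_NE phi k -> 1 <= k <= M.

Definition is_opt (M : nat) : Prop :=
  exists q0, [/\ 0 < q0, M = nnodes + nedges + q0,
     (exists phi, bounded_labeling M phi)
   & forall q', 0 < q' < q0 ->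
       ~ exists phi, bounded_labeling (nnodes + nedges + q') phi].

Definition semitotal (M : nat) (phi : T -> nat) : Prop :=
  is_opt M /\ bounded_labeling M phi.

End Labelings.

(* Relabel by mu u = M and mu w = M - phi w = |phi u - phi w| for w <> u.  As u
   is adjacent to every other node, this exchanges the node labels of phi off u
   with the labels of the edges at u, and leaves all other edge labels alone;
   so mu is again a semitotal labeling with the same label set.  If M - 1 is a
   node label phi x, then mu x = 1.  If M - 1 is an edge label instead, its ends
   carry the labels 1 and M, so phi itself already has 1 as a node label. *)

From mathcomp Require Import all_boot zify.

Set Implicit Arguments.
Unset Strict Implicit.
Unset Printing Implicit Defensive.

Lemma ndistC : commutative ndist.
Proof. by move=> a b; rewrite /ndist maxnC minnC. Qed.

Lemma ndist_pred_top (M a b : nat) : 1 <= a <= M -> 1 <= b <= M ->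
  ndist a b = M - 1 -> a = 1 \/ b = 1.
Proof. rewrite /ndist; lia. Qed.

Lemma bounded_labeling_node (T : finType) (e : rel T) (M : nat) (phi : T -> nat) :
  bounded_labeling e M phi -> forall x, 1 <= phi x <= M.
Proof. by case=> _ bnd x; apply: bnd; left; exists x. Qed.

Lemma adj_of_deg_full (T : finType) (e : rel T) (u : T) :
  irreflexive e -> deg e u = nnodes T - 1 -> forall z, z != u -> e u z.
Proof.
move=> e_irr deg_u z zu.
have sub_nbrs : [set v | e u v] \subset [set~ u].
  by apply/subsetP => v; rewrite !inE; apply: contraTneq => ->; rewrite e_irr.
have nbrs_eq : [set v | e u v] = [set~ u].
  apply/eqP; rewrite eqEcard sub_nbrs /= cardsC1.
  by move: deg_u; rewrite /deg /nnodes => ->; rewrite subn1.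
by have := in_setC1 z u; rewrite zu -nbrs_eq inE.
Qed.

Definition complement_labeling (T : eqType) (u : T) (M : nat) (phi : T -> nat) :
  T -> nat := fun z => if z == u then M else M - phi z.

Section ComplementLabeling.
Variables (T : finType) (e : rel T) (u : T) (M : nat) (phi : T -> nat).
Hypothesis e_irr : irreflexive e.
Hypothesis u_adj : forall z, z != u -> e u z.
Hypothesis phi_distinct : distinct_labeling e phi.
Hypothesis phi_u : phi u = M.
Hypothesis phi_le : forall x, phi x <= M.

Local Notation mu := (complement_labeling u M phi).

Lemma phi_pos x : 0 < phi x.
Proof. by case: phi_distinct. Qed.

Lemma phi_inj : injective phi.
Proof. by case: phi_distinct. Qed.

Lemma phi_lt z : z != u -> phi z < M.
Proof.
move=> zu; rewrite ltn_neqAle phi_le andbT -phi_u.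
by apply: contra zu => /eqP /phi_inj ->.
Qed.

Lemma complement_at_u : mu u = phi u.
Proof. by rewrite /complement_labeling eqxx. Qed.

Lemma complement_off_u w : w != u -> mu w = ndist (phi u) (phi w).
Proof.
move=> wu; rewrite /complement_labeling (negbTE wu) phi_u /ndist.
by have := phi_le w; lia.
Qed.

Lemma complement_edge_label a b : e a b ->
  [/\ a != u, b != u & ndist (mu a) (mu b) = ndist (phi a) (phi b)] \/
  exists2 w, w != u & [set a; b] = [set u; w] /\ ndist (mu a) (mu b) = phi w.
Proof.
move=> eab; have mu_uw w : w != u -> ndist (mu u) (mu w) = phi w.
  move=> wu; rewrite complement_at_u complement_off_u // phi_u /ndist.
  by have := phi_le w; lia.
case: (eqVneq a u) => [au|au]; case: (eqVneq b u) => [bu|bu].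
- by rewrite au bu e_irr in eab.
- by right; exists b; rewrite // au mu_uw.
- by right; exists a; rewrite // bu setUC ndistC mu_uw.
- left; split => //; rewrite /complement_labeling (negbTE au) (negbTE bu) /ndist.
  by have := phi_le a; have := phi_le b; lia.
Qed.

Lemma complement_node_inj : injective mu.
Proof.
move=> a b; rewrite /complement_labeling.
case: (eqVneq a u) => [->|au]; case: (eqVneq b u) => [->|bu] //.
- by have := phi_pos b; have := phi_lt bu; lia.
- by have := phi_pos a; have := phi_lt au; lia.
- by move=> h; apply: phi_inj; have := phi_le a; have := phi_le b; lia.
Qed.

Lemma complement_edge_inj a b a' b' : e a b -> e a' b' ->
  ndist (mu a) (mu b) = ndist (mu a') (mu b') -> [set a; b] = [set a'; b'].
Proof.
case: phi_distinct => _ _ edge_inj node_edge eab eab' h.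
case: (complement_edge_label eab) => [[_ _ h1] | [w _ [-> h1]]];
case: (complement_edge_label eab') => [[_ _ h2] | [w' _ [-> h2]]].
- by apply: edge_inj; rewrite // -h1 -h2.
- by case: (node_edge w' a b eab); rewrite -h1 -h2 h.
- by case: (node_edge w a' b' eab'); rewrite -h1 -h2 h.
- by congr [set u; _]; apply: phi_inj; rewrite -h1 -h2.
Qed.

Lemma complement_node_edge z a b : e a b -> mu z <> ndist (mu a) (mu b).
Proof.
case: phi_distinct => _ _ edge_inj node_edge eab.
case: (complement_edge_label eab) => [[au bu ->] | [w wu [_ ->]]];
case: (eqVneq z u) => [->|zu]; rewrite ?complement_at_u ?(complement_off_u zu).
- exact: node_edge.
- move=> h; have := edge_inj u z a b (u_adj zu) eab h.
  by move/setP/(_ u); rewrite !inE eqxx /= ![u == _]eq_sym (negbTE au) (negbTE bu).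
- by move/phi_inj=> uw; rewrite uw eqxx in wu.
- by move=> h; apply: (node_edge w u z (u_adj zu)).
Qed.

Lemma complement_distinct : distinct_labeling e mu.
Proof.
split.
- move=> z; rewrite /complement_labeling; case: eqP => [_|/eqP zu].
    by rewrite -phi_u phi_pos.
  by rewrite subn_gt0 phi_lt.
- exact: complement_node_inj.
- exact: complement_edge_inj.
- exact: complement_node_edge.
Qed.

Lemma complement_in_NE k : in_NE e mu k -> in_NE e phi k.
Proof.
case=> [[z <-] | [a [b [eab <-]]]].
  case: (eqVneq z u) => [->|zu]; first by rewrite complement_at_u; left; exists u.
  by rewrite complement_off_u //; right; exists u, z; split => //; apply: u_adj.
case: (complement_edge_label eab) => [[_ _ ->] | [w _ [_ ->]]].
  by right; exists a, b.
by left; exists w.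
Qed.

Lemma complement_bounded : bounded_labeling e M phi -> bounded_labeling e M mu.
Proof.
case=> _ bnd; split; first exact: complement_distinct.
by move=> k /complement_in_NE /bnd.
Qed.

End ComplementLabeling.

Theorem theorem8p2 (T : finType) (e : rel T)
  (e_sym : symmetric e) (e_irr : irreflexive e) (e_conn : gconnected e)
  (nsg : ~ supergraceful e)
  (u : T) (deg_u : deg e u = nnodes T - 1)
  (M : nat) (optM : is_opt e M)
  (phi : T -> nat) (semi_phi : semitotal e M phi)
  (phi_u : phi u = M) (Mm1 : in_NE e phi (M - 1)) :
  exists mu : T -> nat, semitotal e M mu /\ in_N mu 1.
Proof.
case: semi_phi => _ bnd_phi; have [phi_distinct _] := bnd_phi.
have phi_range := bounded_labeling_node bnd_phi.
have u_adj := adj_of_deg_full e_irr deg_u.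
have phi_le x : phi x <= M by case/andP: (phi_range x).
case: Mm1 => [[x phi_x] | [x [y [_ dist_xy]]]].
- have xu : x != u.
    by apply/eqP => xu; move: phi_x; rewrite xu phi_u; have := phi_range u; lia.
  exists (complement_labeling u M phi); split.
    by split => //; apply: complement_bounded.
  by exists x; rewrite /complement_labeling (negbTE xu) phi_x; have := phi_range x; lia.
- exists phi; split => //.
  by case: (ndist_pred_top (phi_range x) (phi_range y) dist_xy) => ?; [exists x | exists y].
Qed.
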